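(* For all integers $k,t\geq 2$: $\mathrm{sat}^{\star}([t]^n,C_k)\leq 2^{k-2}$, and $\mathrm{sat}^{\star}([t]^n,A_k)=\Theta(n)$ (as $n\to\infty$ with $k,t$ fixed).
   Context: For positive integers $n,t$, $[n]=\{1,\dots,n\}$ and the hypergrid $[t]^n$ is the set of functions $f:[n]\to[t]$, partially ordered by $f\leq g$ iff $f(i)\leq g(i)$ for all $i\in[n]$. An induced copy of a poset $P$ in a family $\mathcal{F}\subseteq[t]^n$ is an injective map $\phi:P\to\mathcal{F}$ such that $\phi(x)\leq\phi(y)$ iff $x\leq_P y$. A family $\mathcal{F}\subseteq[t]^n$ is induced $P$-free if it contains no induced copy of $P$; it is induced $P$-saturated if it is induced $P$-free and for every $f\in[t]^n\setminus\mathcal{F}$ the family $\mathcal{F}\cup\{f\}$ contains an induced copy of $P$. Whenever $P$ embeds as an induced subposet of $[t]^n$, $\mathrm{sat}^{\star}([t]^n,P)$ denotes the minimum size of an induced $P$-saturated family in $[t]^n$. $C_k$ denotes the chain on $k$ elements and $A_k$ the antichain on $k$ elements. *)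

From mathcomp Require Import all_boot.
Set Implicit Arguments. Unset Strict Implicit. Unset Printing Implicit Defensive.

(* The hypergrid [t]^n: functions [n] -> [t], encoded as {ffun 'I_n -> 'I_t}
   (value j : 'I_t stands for j+1 in [t] = {1,...,t}). *)
Definition grid (n t : nat) := {ffun 'I_n -> 'I_t}.

Definition grid_le n t (f g : grid n t) : bool := [forall i, f i <= g i].

Definition induced_copy n t (P : finType) (leP : rel P)
    (F : {set grid n t}) (phi : P -> grid n t) : Prop :=
  injective phi /\ (forall x, phi x \in F) /\
  (forall x y, grid_le (phi x) (phi y) = leP x y).

Definition induced_free n t (P : finType) (leP : rel P) (F : {set grid n t}) :=
  forall phi, ~ induced_copy leP F phi.

Definition induced_saturated n t (P : finType) (leP : rel P)
    (F : {set grid n t}) :=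
  induced_free leP F /\
  (forall f : grid n t, f \notin F ->
     exists phi, induced_copy leP (f |: F) phi).

(* P embeds as an induced subposet of [t]^n (so that sat* is defined). *)
Definition embeds n t (P : finType) (leP : rel P) :=
  exists phi, induced_copy leP [set: grid n t] phi.

Definition chain_rel (k : nat) : rel 'I_k := fun x y => x <= y.
Definition antichain_rel (k : nat) : rel 'I_k := fun x y => x == y.
Arguments chain_rel : clear implicits.
Arguments antichain_rel : clear implicits.

(* Write [t] as {0, ..., T} and rank a point by the sum of its coordinates.

   For k = 2 the bottom point alone is saturated.  For k >= 3 write
   k - 3 = q T + r with r < T and single out the coordinate q (the pivot).  The family
   consists of the points that vanish after the pivot and have pivot value at most r,
   and of the points that equal T after the pivot and have pivot value below r or
   equal to T.  It has at most 2 (T + 1)^q (r + 1) <= 2^(k-2) points.  The height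
   "sum of the first q coordinates + min (pivot, r) + [the point is in the second
   block]" increases strictly along its chains and is at most q T + r + 1, so the
   family has no k-chain; a point f outside it lies on the k-chain formed by a chain
   of the first block below f, f itself, and a chain of the second block above f.

   Antichains, k = w + 1.  The union of w cyclic maximal chains has at most
   w (n T + 1) points and, by pigeonhole, no (w + 1)-antichain; a point f outside it
   forms an antichain with the points of rank (rank f) on the w chains, because
   distinct points of equal rank are incomparable.  Conversely a saturated family F
   has width at most k - 1, so by Dilworth's theorem it is covered by k - 1 chains.
   The k - 1 points of F completing an outside point f to a k-antichain meet every
   chain, so f is incomparable to a point of the first chain C.  A point of rank l
   squeezed between the points of C nearest to level l is comparable to all of C,
   hence lies in F: F meets all n T + 1 rank levels. *)

From mathcomp Require Import all_boot zify.
Set Implicit Arguments. Unset Strict Implicit. Unset Printing Implicit Defensive.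

Section GridOrder.
Variables n t : nat.
Implicit Types x y z u v : grid n t.

Definition grid_lt x y := grid_le x y && (x != y).

Definition grid_rank x := \sum_i (x i : nat).

Lemma grid_leP x y : reflect (forall i, x i <= y i) (grid_le x y).
Proof. exact: forallP. Qed.

Lemma grid_le_refl : reflexive (@grid_le n t).
Proof. by move=> x; apply/grid_leP. Qed.

Lemma grid_le_trans : transitive (@grid_le n t).
Proof.
move=> y x z /grid_leP lexy /grid_leP leyz.
by apply/grid_leP => i; apply: leq_trans (leyz i).
Qed.

Lemma grid_le_anti : antisymmetric (@grid_le n t).
Proof.
move=> x y /andP[/grid_leP lexy /grid_leP leyx]; apply/ffunP => i.
by apply/val_inj/anti_leq; rewrite lexy leyx.
Qed.

Lemma grid_le_lt_trans x y z : grid_le x y -> grid_lt y z -> grid_lt x z.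
Proof.
move=> lexy /andP[leyz neqyz]; rewrite /grid_lt (grid_le_trans lexy leyz).
apply: contra neqyz => /eqP eqxz; subst z.
by apply/eqP/grid_le_anti; rewrite leyz.
Qed.

Lemma grid_lt_le_trans x y z : grid_lt x y -> grid_le y z -> grid_lt x z.
Proof.
move=> /andP[lexy neqxy] leyz; rewrite /grid_lt (grid_le_trans lexy leyz).
apply: contra neqxy => /eqP eqxz; subst z.
by apply/eqP/grid_le_anti; rewrite lexy.
Qed.

Lemma grid_lt_trans : transitive grid_lt.
Proof. by move=> y x z /andP[lexy _]; apply: grid_le_lt_trans. Qed.

Lemma sorted_grid_lt_cat (s1 s2 : seq (grid n t)) :
  sorted grid_lt s1 -> sorted grid_lt s2 -> {in s1 & s2, forall x y, grid_lt x y} ->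
  sorted grid_lt (s1 ++ s2).
Proof. by rewrite !(sorted_pairwise grid_lt_trans) pairwise_cat => -> -> /allrelP ->. Qed.

Lemma grid_rank_le x y : grid_le x y -> grid_rank x <= grid_rank y.
Proof. by move=> /grid_leP lexy; apply: leq_sum. Qed.

Lemma grid_rank_lt x y : grid_le x y -> x != y -> grid_rank x < grid_rank y.
Proof.
move=> /grid_leP lexy neqxy.
have [i neqi] : exists i, x i != y i.
  by apply/existsP; apply: contraR neqxy => /existsPn eqxy; apply/eqP/ffunP => i; apply/eqP/negPn.
rewrite /grid_rank (bigD1 i) //= [X in _ < X](bigD1 i) //=.
by rewrite -addSn leq_add ?ltn_neqAle ?neqi ?lexy //; apply: leq_sum.
Qed.

Lemma grid_le_same_rank x y :
  grid_rank x = grid_rank y -> grid_le x y = (x == y).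
Proof.
move=> eq_rank; apply/idP/eqP => [lexy | ->]; last exact: grid_le_refl.
by apply/eqP; apply: contraLR isT => /(grid_rank_lt lexy); rewrite eq_rank ltnn.
Qed.

Lemma grid_le_of_rank x y :
  grid_le x y || grid_le y x -> grid_rank x <= grid_rank y -> grid_le x y.
Proof.
case/orP=> [// | leyx] lerank.
have eq_rank : grid_rank y = grid_rank x by apply/anti_leq; rewrite lerank grid_rank_le.
by move: leyx; rewrite (grid_le_same_rank eq_rank) (grid_le_same_rank (esym eq_rank)) eq_sym.
Qed.

End GridOrder.

Section BoundedGrid.
Variables n t : nat.
Implicit Types x y u v : grid n t.+1.

Definition grid_bot : grid n t.+1 := [ffun _ => ord0].
Definition grid_top : grid n t.+1 := [ffun _ => ord_max].

Lemma grid_bot_le x : grid_le grid_bot x.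
Proof. by apply/grid_leP => i; rewrite ffunE. Qed.

Lemma grid_le_top x : grid_le x grid_top.
Proof. by apply/grid_leP => i; rewrite ffunE -ltnS. Qed.

Lemma grid_rank_bot : grid_rank grid_bot = 0.
Proof. by rewrite /grid_rank big1 // => i _; rewrite ffunE. Qed.

Lemma grid_rank_top : grid_rank grid_top = n * t.
Proof.
rewrite /grid_rank (eq_bigr (fun=> t)) => [|i _]; last by rewrite ffunE.
by rewrite sum_nat_const card_ord.
Qed.

Lemma grid_rank_le_top x : grid_rank x <= n * t.
Proof. by rewrite -grid_rank_top grid_rank_le ?grid_le_top. Qed.

Lemma grid_rank_eq0 x : grid_rank x = 0 -> x = grid_bot.
Proof. by move=> rank0; apply/esym/eqP; rewrite -grid_le_same_rank ?grid_rank_bot ?grid_bot_le. Qed.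

Lemma grid_rank_eq_top x : grid_rank x = n * t -> x = grid_top.
Proof. by move=> rank_top; apply/eqP; rewrite -grid_le_same_rank ?grid_rank_top ?grid_le_top. Qed.

Lemma grid_cover_step u v : grid_le u v -> u != v ->
  exists2 w, grid_le u w && grid_le w v & grid_rank w = (grid_rank u).+1.
Proof.
move=> /grid_leP leuv nequv.
have [i ltuvi] : exists i, u i < v i.
  apply/existsP; apply: contraR nequv => /existsPn geuv; apply/eqP/ffunP => i.
  by apply/val_inj/anti_leq; rewrite leuv leqNgt geuv.
have ltui : (u i).+1 < t.+1 by rewrite ltnS (leq_trans ltuvi) // -ltnS.
pose w : grid n t.+1 := [ffun j => if j == i then Ordinal ltui else u j].
have wE j : (w j : nat) = (u j + (j == i))%N.
  by rewrite ffunE; case: eqP => [->|_] /=; rewrite ?addn1 ?addn0.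
exists w.
  by apply/andP; split; apply/grid_leP => j; rewrite wE; case: eqP => [->|_]; rewrite ?addn1 ?addn0.
have sum_eq_i : \sum_j (j == i : nat) = 1.
  by rewrite (bigD1 i) //= eqxx big1 // => j /negbTE ->.
by rewrite /grid_rank (eq_bigr _ (fun j _ => wE j)) big_split /= sum_eq_i addn1.
Qed.

Lemma grid_rank_between u v l : grid_le u v -> grid_rank u <= l -> l <= grid_rank v ->
  exists2 x, grid_le u x && grid_le x v & grid_rank x = l.
Proof.
move dE: (l - grid_rank u) => d; elim: d u dE => [|d IH] u dE leuv leul lelv.
  by exists u; rewrite ?grid_le_refl ?leuv //; lia.
have nequv : u != v by apply: contraTneq lelv => <-; lia.
have [w /andP[leuw lewv] rankw] := grid_cover_step leuv nequv.
have [x /andP[lewx lexv] rankx] := IH w ltac:(lia) lewv ltac:(lia) lelv.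
by exists x; rewrite ?(grid_le_trans leuw lewx) ?lexv.
Qed.

Lemma grid_chain_between u v : grid_le u v ->
  exists s, [/\ sorted (@grid_lt n t.+1) s, size s = (grid_rank v - grid_rank u).+1
              & {in s, forall x, grid_le u x && grid_le x v}].
Proof.
move dE: (grid_rank v - grid_rank u) => d; elim: d u dE => [|d IH] u dE leuv.
  exists [:: u]; split=> // x; rewrite inE => /eqP ->.
  by rewrite grid_le_refl leuv.
have nequv : u != v by apply/eqP => equv; move: dE; rewrite equv subnn.
have [w /andP[leuw lewv] rankw] := grid_cover_step leuv nequv.
have [s [sorted_s size_s s_between]] := IH w ltac:(lia) lewv.
exists (u :: s); split=> /=; rewrite ?size_s //.
  rewrite path_sortedE ?sorted_s ?andbT; last exact: grid_lt_trans.
  apply/allP => x /s_between /andP[lewx _]; rewrite /grid_lt (grid_le_trans leuw lewx).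
  by apply: contraTneq (grid_rank_le lewx) => <-; rewrite rankw ltnn.
move=> x; rewrite inE => /predU1P[-> | /s_between /andP[lewx lexv]].
  by rewrite grid_le_refl.
by rewrite (grid_le_trans leuw lewx) lexv.
Qed.

End BoundedGrid.

Section InducedCopies.
Variables n t : nat.
Implicit Types S : {set grid n t}.

Lemma induced_chain_of_sorted S k (s : seq (grid n t)) x0 :
  sorted (@grid_lt n t) s -> size s = k -> {subset s <= S} ->
  induced_copy (chain_rel k) S (fun i : 'I_k => nth x0 s i).
Proof.
move=> sorted_s size_s s_sub.
have lt_nth (i j : 'I_k) : i < j -> grid_lt (nth x0 s i) (nth x0 s j).
  by move=> ltij; apply: sorted_ltn_nth => //; [exact: grid_lt_trans | rewrite inE size_s..].
have le_nth (i j : 'I_k) : grid_le (nth x0 s i) (nth x0 s j) = (i <= j).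
  case: (ltngtP i j) => [ltij | ltji | /val_inj ->]; last exact: grid_le_refl.
    by case/andP: (lt_nth _ _ ltij).
  case/andP: (lt_nth _ _ ltji) => leji neqji; apply: contraNF neqji => leij.
  by apply/eqP/grid_le_anti; rewrite leij leji.
split; [|split] => //; last by move=> i; apply/s_sub/mem_nth; rewrite size_s.
move=> i j eq_nth; apply/val_inj/anti_leq.
by rewrite -!le_nth eq_nth grid_le_refl.
Qed.

Lemma chain_free_of_rank_bound S k (rho : grid n t -> nat) M :
  {in S &, forall x y, grid_lt x y -> rho x < rho y} -> {in S, forall x, rho x <= M} ->
  M.+1 < k -> induced_free (chain_rel k) S.
Proof.
move=> rho_mono rho_le ltMk phi [phi_inj [phi_S phi_le]].
have rho_ge i (lt_ik : i < k) : i <= rho (phi (Ordinal lt_ik)).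
  elim: i lt_ik => [// | i IH] lt_ik.
  have lt_phi : grid_lt (phi (Ordinal (ltnW lt_ik))) (phi (Ordinal lt_ik)).
    by rewrite /grid_lt phi_le /chain_rel /= leqnSn; apply/eqP => /phi_inj /(congr1 val) /=; lia.
  exact: leq_ltn_trans (IH _) (rho_mono _ _ (phi_S _) (phi_S _) lt_phi).
have lt_pred_k : k.-1 < k by lia.
by have := rho_ge _ lt_pred_k; have := rho_le _ (phi_S (Ordinal lt_pred_k)); lia.
Qed.

Lemma induced_antichain_of_rank S k (phi : 'I_k -> grid n t) L :
  injective phi -> (forall i, phi i \in S) -> (forall i, grid_rank (phi i) = L) ->
  induced_copy (antichain_rel k) S phi.
Proof.
move=> phi_inj phi_S phi_rank; split; [|split] => // i j.
by rewrite grid_le_same_rank ?phi_rank // (inj_eq phi_inj).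
Qed.

End InducedCopies.

Lemma embeds_chain_size n t k : embeds n t.+1 (chain_rel k) -> k <= (n * t).+1.
Proof.
case=> phi copy_phi; rewrite leqNgt; apply/negP => ltk.
apply: (chain_free_of_rank_bound (rho := @grid_rank n t.+1) _ _ ltk copy_phi).
  by move=> x y _ _ /andP[lexy neqxy]; apply: grid_rank_lt.
by move=> x _; apply: grid_rank_le_top.
Qed.

Lemma card_ord_lt N m : m <= N -> #|[pred i : 'I_N | i < m]| = m.
Proof.
move=> le_mN; rewrite -sum1_card -(big_ord_widen _ (fun=> 1) le_mN) /=.
by rewrite sum1_card card_ord.
Qed.

Section ChainFamily.
Variables (n T r : nat) (s : 'I_n).
Hypothesis lt_rT : r < T.
Implicit Types x y f : grid n T.+1.

Definition pre_sum x := \sum_(i : 'I_n | i < s) (x i : nat).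
Definition post_sum x := \sum_(i : 'I_n | s < i) (x i : nat).

Lemma grid_rank_split x : grid_rank x = pre_sum x + x s + post_sum x.
Proof.
rewrite /grid_rank (bigID (fun i : 'I_n => i < s)) /= -addnA; congr (_ + _).
rewrite (bigD1 s) /= ?ltnn //; congr (_ + _); apply: eq_bigl => i.
by rewrite -val_eqE /=; case: ltngtP.
Qed.

Lemma pre_sum_le x y : grid_le x y -> pre_sum x <= pre_sum y.
Proof. by move=> /grid_leP lexy; apply: leq_sum. Qed.

Lemma pre_sum_top : pre_sum (grid_top n T) = s * T.
Proof.
rewrite /pre_sum (eq_bigr (fun=> T)) => [|i _]; last by rewrite ffunE.
by rewrite sum_nat_const card_ord_lt 1?mulnC // ltnW.
Qed.

Lemma grid_le_split x y : (forall i : 'I_n, i < s -> x i <= y i) -> x s <= y s ->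
  (forall i : 'I_n, s < i -> x i <= y i) -> grid_le x y.
Proof.
move=> le_pre le_s le_post; apply/grid_leP => i.
by case: (ltngtP i s) => [/le_pre | /le_post | /val_inj ->].
Qed.

Definition block (P : pred nat) (z : nat) : {set grid n T.+1} :=
  [set x : grid n T.+1 | P (x s) && [forall i : 'I_n, (s < i) ==> (x i == z :> nat)]].

Lemma blockP (P : pred nat) z x :
  reflect (P (x s) /\ forall i : 'I_n, s < i -> x i = z :> nat) (x \in block P z).
Proof.
rewrite inE; apply: (iffP andP) => [[Px /forallP post_z] | [Px post_z]].
  by split=> // i lt_si; apply/eqP; apply: (implyP (post_z i)).
by split=> //; apply/forallP => i; apply/implyP => /post_z ->.
Qed.

Lemma card_block (P : pred nat) z : #|block P z| <= T.+1 ^ s * #|[pred v : 'I_T.+1 | P v]|.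
Proof.
pose restr x : {ffun 'I_s -> 'I_T.+1} := [ffun j => x (widen_ord (ltnW (ltn_ord s)) j)].
have restr_inj : {in block P z &, injective (fun x => (restr x, x s))}.
  move=> x y /blockP[_ x_post] /blockP[_ y_post] [/ffunP eq_pre eq_s].
  apply/ffunP => i; case: (ltngtP i s) => [lt_is | lt_si | /val_inj -> //].
    by have := eq_pre (Ordinal lt_is); rewrite !ffunE; congr (x _ = y _); apply: val_inj.
  by apply: val_inj; rewrite /= x_post ?y_post.
have card_codom : #|setX [set: {ffun 'I_s -> 'I_T.+1}] [set v : 'I_T.+1 | P v]|
    = T.+1 ^ s * #|[pred v : 'I_T.+1 | P v]|.
  by rewrite cardsX cardsT card_ffun !card_ord cardsE.
rewrite -(card_in_imset restr_inj) -card_codom; apply: subset_leq_card.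
by apply/subsetP => _ /imsetP[x /blockP[Px _] ->]; rewrite !inE.
Qed.

Definition low_block := block (fun v => v <= r) 0.
Definition up_block := block (fun v => (v < r) || (v == T)) T.
Definition chain_family := low_block :|: up_block.

Lemma card_chain_family : #|chain_family| <= 2 ^ (s * T + r + 1).
Proof.
have card_low : #|[pred v : 'I_T.+1 | v <= r]| = r.+1.
  by rewrite -(card_ord_lt (N := T.+1) (m := r.+1)) // ltnS ltnW.
have card_up : #|[pred v : 'I_T.+1 | (v < r) || (v == T :> nat)]| = r.+1.
  rewrite (cardD1 ord_max) inE /= eqxx orbT add1n; congr _.+1.
  rewrite -[RHS](card_ord_lt (N := T.+1)); last lia.
  apply: eq_card => v; rewrite !inE -val_eqE /=.
  case: (ltnP v r) => [lt_vr | ge_vr]; last by rewrite /= andNb.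
  by rewrite neq_ltn (ltn_trans lt_vr lt_rT).
have exp_pre : T.+1 ^ s <= 2 ^ (s * T).
  by rewrite mulnC expnM; case: (posnP s) => [-> // | s_gt0]; rewrite leq_exp2r // ltn_expl.
apply: leq_trans (leq_card_setU _ _) _.
apply: leq_trans (leq_add (card_block _ _) (card_block _ _)) _.
rewrite card_low card_up addnn -mul2n addn1 expnS leq_mul2l /= expnD.
by apply: leq_mul => //; apply: ltn_expl.
Qed.

Lemma post_sum_block (P : pred nat) z x :
  x \in block P z -> post_sum x = \sum_(i : 'I_n | s < i) z.
Proof. by case/blockP=> _ x_post; apply: eq_bigr => i /x_post. Qed.

Lemma low_block_down x y : grid_le x y -> y \in low_block -> x \in low_block.
Proof.
move=> /grid_leP lexy /blockP[le_yr y_post]; apply/blockP; split.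
  exact: leq_trans (lexy s) le_yr.
by move=> i /y_post y_0; apply/eqP; rewrite -leqn0 -y_0 lexy.
Qed.

Lemma coord_le x i : x i <= T.
Proof. by rewrite -ltnS. Qed.

Definition chain_height x := pre_sum x + minn (x s) r + (x \notin low_block).

Lemma chain_height_le x : chain_height x <= s * T + r + 1.
Proof.
have := pre_sum_le (grid_le_top x); rewrite pre_sum_top /chain_height.
by case: (x \notin low_block); lia.
Qed.

Lemma chain_height_lt :
  {in chain_family &, forall x y, grid_lt x y -> chain_height x < chain_height y}.
Proof.
move=> x y xF yF /andP[lexy neqxy].
have := grid_rank_lt lexy neqxy; rewrite !grid_rank_split.
have := pre_sum_le lexy; have := grid_leP _ _ lexy s; rewrite /chain_height.
have [ylow | yup] := boolP (y \in low_block).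
  have xlow := low_block_down lexy ylow.
  have /blockP[le_xr _] := xlow; have /blockP[le_yr _] := ylow.
  rewrite xlow (post_sum_block xlow) (post_sum_block ylow) sum_nat_const muln0; lia.
have [xlow | xup] := boolP (x \in low_block); first by lia.
move: xF yF; rewrite !in_setU (negbTE xup) (negbTE yup) /=.
move=> /[dup] /post_sum_block -> /blockP[/orP[lt_xr | /eqP eq_xT] _].
  by move=> /post_sum_block ->; lia.
by move=> /post_sum_block ->; have := coord_le y s; lia.
Qed.

Lemma chain_family_free : induced_free (chain_rel (s * T + r + 3)) chain_family.
Proof.
apply: (chain_free_of_rank_bound (rho := chain_height) (M := s * T + r + 1)).
- exact: chain_height_lt.
- by move=> x _; apply: chain_height_le.
- lia.
Qed.

Definition graft f (b c : 'I_T.+1) : grid n T.+1 :=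
  [ffun i : 'I_n => if i < s then f i else if i == s then b else c].

Lemma graft_pre f b c (i : 'I_n) : i < s -> graft f b c i = f i.
Proof. by rewrite ffunE => ->. Qed.

Lemma graft_pivot f b c : graft f b c s = b.
Proof. by rewrite ffunE ltnn eqxx. Qed.

Lemma graft_post f b c (i : 'I_n) : s < i -> graft f b c i = c.
Proof. by rewrite ffunE -val_eqE /=; case: ltngtP. Qed.

Lemma pre_sum_graft f b c : pre_sum (graft f b c) = pre_sum f.
Proof. by apply: eq_bigr => i /graft_pre ->. Qed.

Lemma grid_rank_graft f b c :
  grid_rank (graft f b c) = pre_sum f + b + \sum_(i : 'I_n | s < i) (c : nat).
Proof.
rewrite grid_rank_split pre_sum_graft graft_pivot; congr (_ + _).
by apply: eq_bigr => i /graft_post ->.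
Qed.

Lemma low_chain f : f \notin low_block -> exists sl, [/\ sorted (@grid_lt n T.+1) sl,
  size sl = (pre_sum f + minn (f s) r).+1 & {in sl, forall x, x \in low_block /\ grid_lt x f}].
Proof.
move=> f_low; have le_min_T : minn (f s) r < T.+1 by lia.
pose g := graft f (Ordinal le_min_T) ord0.
have g_low : g \in low_block.
  by apply/blockP; rewrite graft_pivot geq_minr; split=> // i /graft_post ->.
have lt_gf : grid_lt g f.
  rewrite /grid_lt; apply/andP; split; last by apply: contraNneq f_low => <-.
  apply: grid_le_split => [i /graft_pre -> // | | i /graft_post -> //].
  by rewrite graft_pivot geq_minl.
have [sl [sorted_sl size_sl sl_g]] := grid_chain_between (grid_bot_le g).
exists sl; split=> // [|x /sl_g /andP[_ le_xg]].
  by rewrite size_sl grid_rank_bot grid_rank_graft sum_nat_const muln0 addn0 subn0.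
by rewrite (low_block_down le_xg g_low) (grid_le_lt_trans le_xg lt_gf).
Qed.

Lemma graft_lt_pivot f (b b' c : 'I_T.+1) : b < b' -> grid_lt (graft f b c) (graft f b' c).
Proof.
move=> lt_bb'; apply/andP; split.
  apply: grid_le_split => [i lt_is | | i lt_si]; first by rewrite !graft_pre.
    by rewrite !graft_pivot ltnW.
  by rewrite !graft_post.
apply/negP => /eqP eq_graft; have := graft_pivot f b c; rewrite eq_graft graft_pivot => eq_bb'.
by move: lt_bb'; rewrite eq_bb' ltnn.
Qed.

Lemma grid_rank_top_split :
  grid_rank (grid_top n T) = s * T + T + \sum_(i : 'I_n | s < i) T.
Proof.
rewrite grid_rank_split pre_sum_top ffunE; congr (_ + _).
by apply: eq_bigr => i _; rewrite ffunE.
Qed.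

Lemma le_graft_top f (b : 'I_T.+1) : f s <= b -> grid_le f (graft f b ord_max).
Proof.
move=> le_fb; apply: grid_le_split => [i /graft_pre -> // | | i /graft_post ->].
  by rewrite graft_pivot.
exact: coord_le.
Qed.

Lemma up_block_above f y : grid_le (graft f ord_max ord_max) y -> y \in up_block.
Proof.
move=> /grid_leP le_hy; apply/blockP; split.
  by have := le_hy s; rewrite graft_pivot => le_Ty; rewrite eqn_leq coord_le le_Ty orbT.
move=> i lt_si; have := le_hy i; rewrite graft_post // => le_Ty.
by apply/anti_leq; rewrite coord_le.
Qed.

Lemma up_chain f : f \notin up_block -> exists su, [/\ sorted (@grid_lt n T.+1) su,
  size su = (s * T - pre_sum f + (r - f s)).+1 & {in su, forall y, y \in up_block /\ grid_lt f y}].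
Proof.
move=> f_up; pose h := graft f ord_max ord_max.
have f_lt y : y \in up_block -> grid_le f y -> grid_lt f y.
  by move=> y_up le_fy; rewrite /grid_lt le_fy; apply: contraNneq f_up => ->.
pose mid := [seq graft f (inord j) ord_max | j <- iota (f s) (r - f s)].
have mid_up m : m \in mid -> [/\ m \in up_block, grid_le f m & grid_lt m h].
  case/mapP=> j; rewrite mem_iota => /andP[le_fj lt_j_sum] ->.
  have lt_jr : j < r by lia.
  have lt_jT : j < T.+1 by lia.
  split; first by apply/blockP; rewrite graft_pivot inordK // lt_jr; split=> // i /graft_post ->.
    by apply: le_graft_top; rewrite inordK.
  by apply: graft_lt_pivot; rewrite inordK //=; lia.
have sorted_mid : sorted (@grid_lt n T.+1) mid.
  rewrite sorted_map; apply: (@sub_in_sorted _ [pred j | j < r] ltn); last exact: iota_ltn_sorted.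
    move=> j j'; rewrite !inE => lt_jr lt_j'r lt_jj'.
    by apply: graft_lt_pivot; rewrite !inordK; lia.
  by apply/allP => j; rewrite mem_iota inE; lia.
have [su [sorted_su size_su su_h]] := grid_chain_between (grid_le_top h).
exists (mid ++ su); split.
- apply: sorted_grid_lt_cat => // m y /mid_up[_ _ lt_mh] /su_h /andP[le_hy _].
  exact: grid_lt_le_trans lt_mh le_hy.
- rewrite size_cat size_map size_iota size_su grid_rank_top_split grid_rank_graft /=.
  by have := pre_sum_le (grid_le_top f); rewrite pre_sum_top; lia.
- move=> y; rewrite mem_cat => /orP[/mid_up[y_up le_fy _] | /su_h /andP[le_hy _]].
    by split; last exact: f_lt.
  have y_up := up_block_above le_hy; split=> //; apply: f_lt y_up _.
  exact: grid_le_trans (le_graft_top (b := ord_max) (coord_le f s)) le_hy.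
Qed.

Lemma chain_family_saturating f : f \notin chain_family ->
  exists phi, induced_copy (chain_rel (s * T + r + 3)) (f |: chain_family) phi.
Proof.
rewrite in_setU negb_or => /andP[f_low f_up].
have [sl [sorted_sl size_sl sl_low]] := low_chain f_low.
have [su [sorted_su size_su su_up]] := up_chain f_up.
exists (fun i : 'I__ => nth f (sl ++ f :: su) i); apply: induced_chain_of_sorted.
- apply: sorted_grid_lt_cat => // [| x y /sl_low[_ lt_xf]].
    rewrite /= path_sortedE ?sorted_su ?andbT; last exact: grid_lt_trans.
    by apply/allP => y /su_up[].
  by rewrite inE => /predU1P[-> // | /su_up[_ lt_fy]]; apply: grid_lt_trans lt_fy.
- rewrite size_cat /= size_sl size_su.
  by have := pre_sum_le (grid_le_top f); rewrite pre_sum_top; lia.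
- move=> x; rewrite mem_cat inE => /or3P[/sl_low[x_low _] | /eqP -> | /su_up[x_up _]].
  + by rewrite in_setU1 in_setU x_low orbT.
  + exact: setU11.
  + by rewrite in_setU1 in_setU x_up !orbT.
Qed.

End ChainFamily.

Section CyclicChains.
Variables n T : nat.

Definition cyc_offset (j i : nat) := if j <= i then i - j else i + n - j.

(* The j-th cyclic chain raises the coordinates j, j + 1, ..., n - 1, 0, ..., j - 1
   from 0 to T one after the other; cyc_chain j L is its point of rank L. *)
Definition cyc_chain (j L : nat) : grid n T.+1 :=
  [ffun i : 'I_n => inord (minn T (L - cyc_offset j i * T))].

Lemma cyc_chainE j L i : cyc_chain j L i = minn T (L - cyc_offset j i * T) :> nat.
Proof. by rewrite ffunE inordK // ltnS geq_minl. Qed.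

Lemma cyc_chain_mono j L L' : L <= L' -> grid_le (cyc_chain j L) (cyc_chain j L').
Proof. by move=> le_LL'; apply/grid_leP => i; rewrite !cyc_chainE; lia. Qed.

Lemma sum_fill_blocks m L : L <= m * T -> \sum_(o < m) minn T (L - o * T) = L.
Proof.
elim: m L => [|m IH] L le_L; first by rewrite big_ord0; lia.
rewrite mulSn in le_L; rewrite big_ord_recl mul0n subn0.
rewrite (eq_bigr (fun o : 'I_m => minn T (L - T - o * T))) => [|o _]; last first.
  by rewrite lift0 mulSn subnDA.
case: (leqP T L) => [le_TL | lt_LT]; first by rewrite IH; lia.
by rewrite big1 => [|o _]; lia.
Qed.

Lemma grid_rank_cyc_chain j L : j < n -> L <= n * T -> grid_rank (cyc_chain j L) = L.
Proof.
move=> lt_jn le_L.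
have lt_offset (i : 'I_n) : cyc_offset j i < n.
  by have := ltn_ord i; rewrite /cyc_offset; case: (leqP j i); lia.
pose o (i : 'I_n) : 'I_n := Ordinal (lt_offset i).
have o_inj : injective o.
  move=> i i' /(congr1 val); rewrite /= /cyc_offset => eq_offset; apply: ord_inj.
  by move: eq_offset (ltn_ord i) (ltn_ord i'); case: (leqP j i); case: (leqP j i'); lia.
rewrite /grid_rank (eq_bigr (fun i => minn T (L - o i * T))) => [|i _]; last exact: cyc_chainE.
rewrite -(reindex_inj (P := xpredT) (F := fun o : 'I_n => minn T (L - o * T)) o_inj).
exact: sum_fill_blocks.
Qed.

Lemma cyc_chain_neq j l L : j < n -> l < n -> j != l -> 0 < L < n * T ->
  cyc_chain j L != cyc_chain l L.
Proof.
move=> lt_jn lt_ln neq_jl /andP[L_gt0 lt_L]; apply/eqP => eq_chains.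
(* Chain j raises coordinate j first and its cyclic predecessor p last. *)
pose p := if j == 0 then n.-1 else j.-1.
have lt_pn : p < n by rewrite /p; case: eqP; lia.
have off_jj : cyc_offset j j = 0 by rewrite /cyc_offset leqnn subnn.
have off_jp : cyc_offset j p = n.-1.
  rewrite /cyc_offset /p; case: (posnP j) => [-> | j_gt0] /=; first exact: subn0.
  by case: (leqP j j.-1); lia.
have off_lp : (cyc_offset l p).+1 = cyc_offset l j.
  move: neq_jl; rewrite /cyc_offset /p; case: (posnP j) => [-> | j_gt0] /=.
    by case: (leqP l n.-1); case: (leqP l 0); lia.
  by case: (leqP l j.-1); case: (leqP l j); lia.
have nT_split : n * T = T + n.-1 * T by rewrite -mulSn prednK //; lia.
have := congr1 (fun x : grid n T.+1 => x (Ordinal lt_jn) : nat) eq_chains.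
have := congr1 (fun x : grid n T.+1 => x (Ordinal lt_pn) : nat) eq_chains.
rewrite !cyc_chainE /= off_jj off_jp -off_lp mul0n subn0 mulSn; lia.
Qed.

Lemma cyc_chain_eq j l L : j < n -> l < n -> 0 < L < n * T ->
  (cyc_chain j L == cyc_chain l L) = (j == l).
Proof.
move=> lt_jn lt_ln L_range; apply/eqP/eqP => [eq_chains | -> //].
apply/eqP; apply: contraTT isT => neq_jl.
by have := cyc_chain_neq lt_jn lt_ln neq_jl L_range; rewrite eq_chains eqxx.
Qed.

Lemma antichain_embeds k : k <= n -> 1 < n * T -> embeds n T.+1 (antichain_rel k).
Proof.
move=> le_kn lt_1_nT; exists (fun i : 'I_k => cyc_chain i 1).
have lt_n (i : 'I_k) : i < n := leq_trans (ltn_ord i) le_kn.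
apply: (@induced_antichain_of_rank _ _ _ _ _ 1) => [i j /eqP | i | i].
- by rewrite cyc_chain_eq // => /eqP /val_inj.
- by rewrite inE.
- by apply: grid_rank_cyc_chain; [apply: lt_n | apply: ltnW].
Qed.

Definition antichain_family w : {set grid n T.+1} :=
  [set cyc_chain p.1 p.2 | p : 'I_w * 'I_(n * T).+1].

Lemma card_antichain_family w : #|antichain_family w| <= w * (n * T).+1.
Proof. by apply: leq_trans (leq_imset_card _ _) _; rewrite card_prod !card_ord. Qed.

Lemma mem_antichain_family w j L :
  j < w -> L <= n * T -> cyc_chain j L \in antichain_family w.
Proof.
by move=> lt_jw le_L; apply/imsetP; exists (Ordinal lt_jw, Ordinal (le_L : L < (n * T).+1)).
Qed.

Lemma antichain_family_free w : induced_free (antichain_rel w.+1) (antichain_family w).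
Proof.
move=> phi [_ [phi_F phi_le]].
have /fin_all_exists[idx idxP] i : exists p : 'I_w * 'I_(n * T).+1, phi i = cyc_chain p.1 p.2.
  by case/imsetP: (phi_F i) => p _ ->; exists p.
have idx_inj : injective (fun i => (idx i).1).
  move=> i i' eq_idx; apply/eqP; apply: contraT => neq_ii'.
  have := phi_le i i'; have := phi_le i' i.
  rewrite /antichain_rel eq_sym (negbTE neq_ii') !idxP /= eq_idx.
  by case: (leqP (idx i).2 (idx i').2) => [/cyc_chain_mono -> | /ltnW /cyc_chain_mono ->].
by move/leq_card: idx_inj; rewrite !card_ord ltnn.
Qed.

Lemma antichain_family_saturating w f : 0 < w -> w <= n -> f \notin antichain_family w ->
  exists phi, induced_copy (antichain_rel w.+1) (f |: antichain_family w) phi.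
Proof.
move=> w_gt0 le_wn fF; set L := grid_rank f.
have le_L : L <= n * T := grid_rank_le_top f.
have chain_neq_f j : j < w -> cyc_chain j L != f.
  by move=> lt_jw; apply: contraNneq fF => <-; apply: mem_antichain_family.
have rank_chain j : j < w -> grid_rank (cyc_chain j L) = L.
  by move=> lt_jw; apply: grid_rank_cyc_chain => //; apply: leq_trans le_wn.
have L_range : 0 < L < n * T.
  have rank0 := rank_chain 0 w_gt0.
  rewrite lt0n ltn_neqAle le_L andbT; apply/andP; split; apply: contra (chain_neq_f 0 w_gt0).
    by move=> /eqP L0; rewrite (grid_rank_eq0 L0) (grid_rank_eq0 (x := cyc_chain 0 L)) ?rank0.
  move=> /eqP L_top; rewrite (grid_rank_eq_top L_top).
  by rewrite (grid_rank_eq_top (x := cyc_chain 0 L)) ?rank0.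
have lt_w (i : 'I_w.+1) : i != ord_max -> i < w.
  by rewrite -val_eqE /= => ne_iw; have := ltn_ord i; lia.
pose phi (i : 'I_w.+1) := if i == ord_max then f else cyc_chain i L.
exists phi; apply: (@induced_antichain_of_rank _ _ _ _ _ L).
- move=> i i'; rewrite /phi.
  case: (eqVneq i ord_max) => [-> | ne_i]; case: (eqVneq i' ord_max) => [-> | ne_i'] //.
  + by move/esym/eqP; rewrite (negbTE (chain_neq_f _ (lt_w _ ne_i'))).
  + by move/eqP; rewrite (negbTE (chain_neq_f _ (lt_w _ ne_i))).
  by move/eqP; rewrite cyc_chain_eq ?(leq_trans (lt_w _ _) le_wn) // => /eqP /val_inj.
- move=> i; rewrite /phi; case: (eqVneq i ord_max) => [_ | ne_i]; first exact: setU11.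
  by rewrite setU1r // mem_antichain_family ?lt_w.
- by move=> i; rewrite /phi; case: (eqVneq i ord_max) => [_ | ne_i] //; rewrite rank_chain ?lt_w.
Qed.

End CyclicChains.

Lemma colouring_onto (T : finType) (B : {set T}) (c : T -> nat) w :
  {in B &, injective c} -> {in B, forall x, c x < w} -> #|B| = w ->
  forall i, i < w -> exists2 x, x \in B & c x = i.
Proof.
move=> c_inj c_lt card_B i lt_iw.
have uniq_c : uniq (map c (enum B)).
  by rewrite map_inj_in_uniq ?enum_uniq // => x y; rewrite !mem_enum; apply: c_inj.
have sub_c : {subset map c (enum B) <= iota 0 w}.
  by move=> j /mapP[x]; rewrite mem_enum => /c_lt lt_cx ->; rewrite mem_iota.
have size_c : size (iota 0 w) <= size (map c (enum B)).
  by rewrite size_map -cardE card_B size_iota.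
have [_ eq_c] := uniq_min_size uniq_c sub_c size_c.
have /mapP[x xB ->] : i \in map c (enum B) by rewrite eq_c mem_iota.
by exists x; rewrite // -mem_enum.
Qed.

Section Dilworth.
Variables (T : finType) (le : rel T).
Hypotheses (le_refl : reflexive le) (le_anti : antisymmetric le) (le_trans : transitive le).
Implicit Types (A B K : {set T}) (c : T -> nat).

Definition antichain B := [forall x in B, forall y in B, le x y ==> (x == y)].

Definition width_le A w := forall B, B \subset A -> antichain B -> #|B| <= w.

Definition chain_colouring A w c :=
  {in A, forall x, c x < w} /\ {in A &, forall x y, c x = c y -> le x y || le y x}.

Lemma antichainP B : reflect {in B &, forall x y, le x y -> x = y} (antichain B).
Proof.
apply: (iffP forall_inP) => [anti_B x y xB yB lexy | anti_B x xB].
  by have /forall_inP/(_ y yB) := anti_B x xB; rewrite lexy => /eqP.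
by apply/forall_inP => y yB; apply/implyP => /(anti_B x y xB yB) ->.
Qed.

Lemma chain_colouring_inj A w c B :
  chain_colouring A w c -> B \subset A -> antichain B -> {in B &, injective c}.
Proof.
move=> [_ c_chain] /subsetP subBA /antichainP anti_B x y xB yB.
move/(c_chain x y (subBA x xB) (subBA y yB)).
by case/orP=> [/anti_B | /anti_B /esym] ->.
Qed.

Lemma chain_colouring_add_chain A K w c :
  {in K &, forall x y, le x y || le y x} -> chain_colouring (A :\: K) w c ->
  chain_colouring A w.+1 (fun z => if z \in K then w else c z).
Proof.
move=> K_chain [c_lt c_chain]; split=> [x xA | x y xA yA].
  by case: ifP => // xK; apply: leq_trans (c_lt _ _) _; rewrite // inE xK.
case: ifP => xK; case: ifP => yK; first by move=> _; apply: K_chain.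
- by move=> eq_c; have := c_lt y; rewrite inE yK yA -eq_c ltnn => /(_ isT).
- by move=> eq_c; have := c_lt x; rewrite inE xK xA eq_c ltnn => /(_ isT).
by apply: c_chain; rewrite inE ?xK ?yK.
Qed.

Definition height x := #|[set y | le y x]|.

Lemma height_lt x y : le x y -> x != y -> height x < height y.
Proof.
move=> lexy neqxy; apply: proper_card; apply/properP; split.
  by apply/subsetP => z; rewrite !inE => /le_trans; apply.
exists y; rewrite !inE ?le_refl //; apply: contra neqxy => leyx.
by rewrite (@le_anti x y) ?lexy.
Qed.

Section MaximalElementStep.
Variables (A : {set T}) (a : T) (w : nat) (c : T -> nat).
Hypotheses (aA : a \in A) (a_max : {in A, forall z, le a z -> z = a}).
Hypotheses (width_A : width_le A w) (col : chain_colouring (A :\ a) w c).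

Let wide B := [&& B \subset A :\ a, antichain B & #|B| == w].
Let crit z := [exists B, wide B && (z \in B)].
Let is_top i x := [/\ crit x, c x = i & forall z, crit z -> c z = i -> le z x].

Lemma wide_colour_onto B i : wide B -> i < w -> exists2 z, z \in B & c z = i.
Proof.
case/and3P=> subB anti_B /eqP card_B; have [c_lt _] := col.
apply: colouring_onto => //; first exact: chain_colouring_inj col subB anti_B.
by move=> z /(subsetP subB) /c_lt.
Qed.

Lemma crit_sub z : crit z -> z \in A :\ a.
Proof. by case/existsP=> B /andP[/and3P[subB _ _] zB]; apply: (subsetP subB). Qed.

Lemma crit_top i : i < w -> (exists B, wide B) -> exists x, is_top i x.
Proof.
move=> lt_iw [B wideB]; have [_ c_chain] := col.
have [z0 z0B cz0] := wide_colour_onto wideB lt_iw.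
have crit_z0 : crit z0 && (c z0 == i).
  by rewrite cz0 eqxx andbT; apply/existsP; exists B; rewrite wideB z0B.
have [x /andP[crit_x /eqP cx] x_max] :=
  @arg_maxnP _ z0 (fun z => crit z && (c z == i)) height crit_z0.
exists x; split=> // z crit_z cz.
have := c_chain z x (crit_sub crit_z) (crit_sub crit_x); rewrite cz cx => /(_ erefl).
case/orP=> // lexz; have [-> // | neqxz] := eqVneq x z.
by have := height_lt lexz neqxz; have := x_max z; rewrite crit_z cz eqxx => /(_ isT); lia.
Qed.

Lemma tops_incomparable i j x y : is_top i x -> is_top j y -> i != j -> i < w -> ~~ le x y.
Proof.
move=> [_ cx x_top] [crit_y cy _] neq_ij lt_iw; apply/negP => lexy.
case/existsP: crit_y => B /andP[wideB yB]; have /and3P[_ /antichainP anti_B _] := wideB.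
have [z zB cz] := wide_colour_onto wideB lt_iw.
have crit_z : crit z by apply/existsP; exists B; rewrite wideB zB.
have eq_zy := anti_B z y zB yB (le_trans (x_top z crit_z cz) lexy).
by move: neq_ij; rewrite -cz -cy eq_zy eqxx.
Qed.

Lemma top_below_max (x : 'I_w -> T) :
  (forall i : 'I_w, is_top i (x i)) -> exists i : 'I_w, le (x i) a.
Proof.
move=> x_top; case: (pickP (fun i => le (x i) a)) => [i le_xa | not_below]; first by exists i.
have x_incomparable (i j : 'I_w) : i != j -> ~~ le (x i) (x j).
  by move=> neq_ij; apply: tops_incomparable (x_top i) (x_top j) neq_ij (ltn_ord i).
have x_inj : injective x.
  by move=> i j eq_x; apply/eqP; apply: contraTT isT => /x_incomparable; rewrite eq_x le_refl.
have xA' i : x i \in A :\ a by case: (x_top i) => /crit_sub.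
have a_notin : a \notin [set x i | i in 'I_w].
  by apply/imsetP => -[i _ eq_a]; move: (xA' i); rewrite -eq_a !inE eqxx.
suff : #|a |: [set x i | i in 'I_w]| <= w by rewrite cardsU1 a_notin card_imset // card_ord ltnn.
apply: width_A.
  apply/subsetP => z; rewrite !inE => /orP[/eqP -> // | /imsetP[i _ ->]].
  by have := xA' i; rewrite !inE => /andP[].
apply/antichainP => y z; rewrite !inE.
move=> /orP[/eqP -> | /imsetP[i _ ->]] /orP[/eqP -> | /imsetP[j _ ->]] // le_yz.
- have := xA' j; rewrite !inE => /andP[neq_xa /a_max/(_ le_yz) eq_xa].
  by rewrite eq_xa eqxx in neq_xa.
- by move: (not_below i); rewrite /= le_yz.
apply/eqP; apply: contraTT le_yz => neq_x; apply: x_incomparable.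
by apply: contra_neq neq_x => ->.
Qed.

Lemma maximal_element_step : exists K, [/\ a \in K, K \subset A,
  {in K &, forall x y, le x y || le y x} & width_le (A :\: K) w.-1].
Proof.
have [c_lt c_chain] := col.
case: (pickP wide) => [B wideB | no_wide]; last first.
  exists [set a]; split=> [||x y|B subB anti_B]; rewrite ?set11 ?sub1set //.
    by rewrite !inE => /eqP -> /eqP ->; rewrite le_refl.
  have := width_A (subset_trans subB (subsetDl _ _)) anti_B.
  by have := no_wide B; rewrite /wide subB anti_B /= => /negbT; lia.
(* The highest critical points of the w colours are pairwise incomparable, so one of them
   lies below a; together with a, the points of its colour below it form a chain that
   meets every w-antichain. *)
have /fin_all_exists[x x_top] : forall i : 'I_w, exists x, is_top i x.
  by move=> i; apply: crit_top => //; exists B.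
have [i0 le_x0a] := top_below_max x_top.
pose K := a |: [set z in A :\ a | (c z == i0) && le z (x i0)].
have K_below z : z \in K -> le z a.
  rewrite !inE => /orP[/eqP -> | /andP[_ /andP[_ le_zx]]]; first exact: le_refl.
  exact: le_trans le_zx le_x0a.
exists K; split; first exact: setU11.
- by apply/subsetP => z; rewrite !inE => /orP[/eqP -> // | /andP[/andP[_ zA] _]].
- move=> y z yK zK; case: (eqVneq y a) => [-> | neq_ya]; first by rewrite K_below ?orbT.
  case: (eqVneq z a) => [-> | neq_za]; first by rewrite K_below.
  move: yK zK; rewrite !in_setU1 (negbTE neq_ya) (negbTE neq_za) !inE /=.
  move=> /andP[yA' /andP[/eqP cy _]] /andP[zA' /andP[/eqP cz _]].
  by apply: c_chain; rewrite ?inE ?cy ?cz.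
move=> B' subB' anti_B'; rewrite leqNgt; apply/negP => big_B'.
have subB'A : B' \subset A :\ a.
  by apply: subset_trans subB' _; apply: setDS; rewrite sub1set setU11.
have wideB' : wide B'.
  rewrite /wide subB'A anti_B' eqn_leq width_A ?(subset_trans subB'A (subsetDl _ _)) //=.
  by have := ltn_ord i0; lia.
have [z zB' cz] := wide_colour_onto wideB' (ltn_ord i0).
have crit_z : crit z by apply/existsP; exists B'; rewrite wideB' zB'.
have [_ _ below_x0] := x_top i0.
have zK : z \in K.
  by rewrite in_setU1 in_set (crit_sub crit_z) cz eqxx (below_x0 z crit_z cz) orbT.
by have := subsetP subB' z zB'; rewrite in_setD zK.
Qed.

End MaximalElementStep.

Theorem dilworth A w : width_le A w -> exists c, chain_colouring A w c.
Proof.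
elim: {A}#|A|.+1 {-2}A (ltnSn #|A|) w => [// | m IH] A lt_Am w width_A.
have [-> | [a0 a0A]] := set_0Vmem A; first by exists (fun=> 0); split=> x; rewrite inE.
have [a aA a_top] := arg_maxnP height a0A; have {}aA : a \in A := aA.
have a_max : {in A, forall z, le a z -> z = a}.
  move=> z zA le_az; apply/eqP; apply: contraT => neq_za.
  by have := height_lt le_az (contra_neq esym neq_za); have := a_top z zA; lia.
have card_A' : #|A :\ a| < m by move: lt_Am; rewrite (cardsD1 a) aA.
have [c col] := IH (A :\ a) card_A' w (fun B subB => width_A B (subset_trans subB (subsetDl _ _))).
have [K [aK subKA K_chain width_rest]] := maximal_element_step aA a_max width_A col.
have card_rest : #|A :\: K| < m.
  apply: leq_trans _ card_A'; apply: subset_leq_card; apply: setDS; by rewrite sub1set.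
have [c' col'] := IH (A :\: K) card_rest w.-1 width_rest.
have w_gt0 : 0 < w.
  apply: leq_trans (width_A [set a] _ _); rewrite ?cards1 ?sub1set //.
  by apply/antichainP => x y; rewrite !inE => /eqP -> /eqP ->.
rewrite -(prednK w_gt0); exists (fun z => if z \in K then w.-1 else c' z).
exact: chain_colouring_add_chain.
Qed.

End Dilworth.

Section LowerBound.
Variables n t : nat.
Implicit Types F C : {set grid n t.+1}.

Lemma width_of_antichain_free k F :
  induced_free (antichain_rel k) F -> width_le (@grid_le n t.+1) F k.-1.
Proof.
move=> F_free B subBF /antichainP anti_B; rewrite leqNgt; apply/negP => lt_kB.
have le_kB : k <= #|B| by lia.
pose phi (i : 'I_k) := enum_val (widen_ord le_kB i).
have phi_inj : injective phi by move=> i j /enum_val_inj [] /ord_inj.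
apply: (F_free phi); split; [|split] => // [i | i j].
  exact: subsetP subBF _ (enum_valP _).
rewrite /antichain_rel -(inj_eq phi_inj); apply/idP/eqP => [le_ij | ->]; last exact: grid_le_refl.
exact: anti_B (enum_valP _) (enum_valP _) le_ij.
Qed.

Lemma saturated_meets_colour k F c :
  1 < k -> induced_saturated (antichain_rel k) F ->
  chain_colouring (@grid_le n t.+1) F k.-1 c -> forall f, f \notin F ->
  exists2 g, g \in [set g in F | c g == 0] & ~~ grid_le f g && ~~ grid_le g f.
Proof.
move=> lt_1k [F_free F_sat] col f fF; have [c_lt _] := col.
have [phi [phi_inj [phi_in phi_le]]] := F_sat f fF.
have [i0 phi_i0] : exists i0, phi i0 = f.
  case: (pickP (fun i => phi i == f)) => [i /eqP | not_f]; first by exists i.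
  by case: (F_free phi); split=> //; split=> // i; have := phi_in i; rewrite in_setU1 not_f.
have phi_F i : i != i0 -> phi i \in F.
  by move=> neq_i; have := phi_in i; rewrite in_setU1 -phi_i0 (inj_eq phi_inj) (negbTE neq_i).
pose B := [set phi i | i in [set~ i0]].
have subBF : B \subset F by apply/subsetP => y /imsetP[i]; rewrite !inE => /phi_F ? ->.
have anti_B : antichain (@grid_le n t.+1) B.
  apply/antichainP => _ _ /imsetP[i _ ->] /imsetP[j _ ->].
  by rewrite phi_le /antichain_rel => /eqP ->.
have card_B : #|B| = k.-1 by rewrite card_imset // cardsC1 card_ord.
have [y /imsetP[i iB ->] ci] := colouring_onto (chain_colouring_inj col subBF anti_B)
  (fun x xB => c_lt x (subsetP subBF x xB)) card_B (i := 0) ltac:(lia).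
have neq_i : i != i0 by move: iB; rewrite !inE.
exists (phi i); first by rewrite inE phi_F // ci eqxx.
by rewrite -phi_i0 !phi_le /antichain_rel eq_sym (negbTE neq_i).
Qed.

Lemma rank_levels_of_chain F C :
  {in C &, forall x y, grid_le x y || grid_le y x} ->
  (forall f, f \notin F -> exists2 g, g \in C & ~~ grid_le f g && ~~ grid_le g f) ->
  forall l, l <= n * t -> exists2 x, x \in F & grid_rank x = l.
Proof.
move=> C_chain C_meets l le_l.
pose C' := grid_bot n t |: (grid_top n t |: C).
have C'_chain : {in C' &, forall x y, grid_le x y || grid_le y x}.
  move=> x y; rewrite !inE => /or3P[/eqP -> | /eqP -> | xC] /or3P[/eqP -> | /eqP -> | yC];
    rewrite ?grid_bot_le ?grid_le_top ?orbT //; exact: C_chain.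
have bot_below : grid_bot n t \in [pred x | (x \in C') && (grid_rank x <= l)].
  by rewrite !inE eqxx grid_rank_bot.
have top_above : grid_top n t \in [pred x | (x \in C') && (l <= grid_rank x)].
  by rewrite !inE eqxx orbT grid_rank_top.
have [u /andP[uC' le_ul] u_max] := arg_maxnP (@grid_rank n t.+1) bot_below.
have [v /andP[vC' le_lv] v_min] := arg_minnP (@grid_rank n t.+1) top_above.
have le_uv : grid_le u v := grid_le_of_rank (C'_chain u v uC' vC') (leq_trans le_ul le_lv).
have [x /andP[le_ux le_xv] rank_x] := grid_rank_between le_uv le_ul le_lv.
exists x => //; apply: contraT => xF.
have [g gC /andP[nle_xg nle_gx]] := C_meets x xF.
have gC' : g \in C' by rewrite !inE gC !orbT.
case: (leqP (grid_rank g) l) => [le_gl | lt_lg].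
  have := u_max g; rewrite /= gC' le_gl => /(_ isT) /(grid_le_of_rank (C'_chain g u gC' uC')).
  by move=> le_gu; rewrite (grid_le_trans le_gu le_ux) in nle_gx.
have := v_min g; rewrite /= gC' (ltnW lt_lg) => /(_ isT) /(grid_le_of_rank (C'_chain v g vC' gC')).
by move=> le_vg; rewrite (grid_le_trans le_xv le_vg) in nle_xg.
Qed.

Lemma card_ge_of_rank_levels F m :
  (forall l, l < m -> exists2 x, x \in F & grid_rank x = l) -> m <= #|F|.
Proof.
move=> levels; have /fin_all_exists[x xP] (l : 'I_m) : exists x, (x \in F) && (grid_rank x == l).
  by have [x xF rank_x] := levels l (ltn_ord l); exists x; rewrite xF rank_x eqxx.
have x_inj : injective x.
  move=> i j eq_x; apply: ord_inj.
  by move: (xP i) (xP j) => /andP[_ /eqP <-] /andP[_ /eqP <-]; rewrite eq_x.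
rewrite -[m]card_ord -(card_imset _ x_inj); apply: subset_leq_card.
by apply/subsetP => _ /imsetP[l _ ->]; case/andP: (xP l).
Qed.

Lemma antichain_saturated_card k F :
  1 < k -> induced_saturated (antichain_rel k) F -> (n * t).+1 <= #|F|.
Proof.
move=> lt_1k F_sat; have [F_free _] := F_sat.
have [c col] := dilworth (@grid_le_refl n t.+1) (@grid_le_anti n t.+1) (@grid_le_trans n t.+1)
  (width_of_antichain_free F_free).
apply: card_ge_of_rank_levels => l lt_l.
apply: (rank_levels_of_chain (C := [set g in F | c g == 0])); last by rewrite -ltnS.
  move=> x y; rewrite !inE => /andP[xF /eqP cx] /andP[yF /eqP cy].
  by apply: col.2; rewrite ?cx ?cy.
exact: saturated_meets_colour lt_1k F_sat col.
Qed.

End LowerBound.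

Lemma bot_chain2_saturated n T : induced_saturated (chain_rel 2) [set grid_bot n T].
Proof.
split.
  apply: (chain_free_of_rank_bound (rho := fun=> 0) (M := 0)) => //.
  by move=> x y; rewrite !inE => /eqP -> /eqP ->; rewrite /grid_lt eqxx andbF.
move=> f; rewrite inE => neq_f.
exists (fun i : 'I_2 => nth f [:: grid_bot n T; f] i); apply: induced_chain_of_sorted => //.
  by rewrite /= andbT /grid_lt grid_bot_le eq_sym.
by move=> x; rewrite !inE => /orP[-> | /eqP ->]; rewrite ?orbT ?eqxx.
Qed.

Lemma chain_saturated_bound n T k : 0 < T -> 1 < k -> embeds n T.+1 (chain_rel k) ->
  exists F : {set grid n T.+1}, induced_saturated (chain_rel k) F /\ #|F| <= 2 ^ (k - 2).
Proof.
move=> T_gt0 lt_1k /embeds_chain_size le_k.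
case: k lt_1k le_k => [|[|[|k]]] // _ le_k.
  by exists [set grid_bot n T]; rewrite cards1; split=> //; apply: bot_chain2_saturated.
have k_split : k.+3 = k %/ T * T + k %% T + 3 by rewrite -divn_eq addn3.
have lt_qn : k %/ T < n.
  by rewrite -(ltn_pmul2r T_gt0); apply: leq_ltn_trans (leq_divM k T) _; lia.
have lt_rT : k %% T < T := ltn_pmod k T_gt0.
pose s : 'I_n := Ordinal lt_qn.
exists (chain_family T (k %% T) s); rewrite k_split; split.
  split=> [|f]; first exact: (chain_family_free (s := s) lt_rT).
  exact: (chain_family_saturating (s := s) lt_rT).
have -> : k %/ T * T + k %% T + 3 - 2 = k %/ T * T + k %% T + 1 by lia.
exact: card_chain_family.
Qed.

Lemma antichain_family_saturated n T w : 0 < w -> w <= n ->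
  induced_saturated (antichain_rel w.+1) (antichain_family n T w).
Proof.
move=> w_gt0 le_wn; split=> [|f]; first exact: antichain_family_free.
exact: antichain_family_saturating.
Qed.

Unset Implicit Arguments.

Theorem mainTheorem4 (k t : nat) (hk : 2 <= k) (ht : 2 <= t) :
  (* sat*([t]^n, C_k) <= 2^(k-2) whenever it is defined *)
  (forall n : nat, embeds n t (chain_rel k) ->
     exists F : {set grid n t},
       induced_saturated (chain_rel k) F /\ #|F| <= 2 ^ (k - 2))
  /\
  (* sat*([t]^n, A_k) = Theta(n) *)
  (exists (a b N : nat), 0 < a /\ 0 < b /\
     forall n : nat, N <= n ->
       embeds n t (antichain_rel k) /\
       (exists F : {set grid n t},
          induced_saturated (antichain_rel k) F /\ #|F| <= b * n) /\
       (forall F : {set grid n t},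
          induced_saturated (antichain_rel k) F -> n <= a * #|F|)).
Proof.
case: t ht => [// | T] /ltnSE T_gt0.
split=> [n | ]; first exact: chain_saturated_bound.
case: k hk => [// | w] /ltnSE w_gt0.
exists 1, (w * T.+1), w.+1; do 2!split=> //; first by rewrite muln_gt0 w_gt0.
move=> n lt_wn; split.
  by apply: antichain_embeds => //; apply: leq_trans (leq_pmulr n T_gt0); lia.
split=> [| F F_sat].
  exists (antichain_family n T w); split; first by apply: antichain_family_saturated; lia.
  apply: leq_trans (@card_antichain_family n T w) _; rewrite -mulnA leq_mul2l; nia.
have le_F := antichain_saturated_card (w_gt0 : 1 < w.+1) F_sat.
by rewrite mul1n (leq_trans _ le_F) // ltnW // ltnS leq_pmulr.
Qed.
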